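(* Let $f=\frac1n\sum_{i=1}^n f_i$, where each $f_i:\mathbb{R}^d\to\mathbb{R}$ is differentiable, bounded from below with infimum $f_i^{\mathrm{inf}}$, and $L_i$-smooth ($f_i(y)\le f_i(x)+\langle\nabla f_i(x),y-x\rangle+\frac{L_i}{2}\|y-x\|^2$ for all $x,y$); let $f^{\mathrm{inf}}=\inf f$. For each $i$ and $x$, let $g_i(x)$ be a random vector with $\mathbb{E}[g_i(x)]=\nabla f_i(x)$ satisfying, for some constants $A_i,B_i,C_i\ge0$ and all $x$, $$\mathbb{E}\|g_i(x)\|^2\le 2A_i(f_i(x)-f_i^{\mathrm{inf}})+B_i\|\nabla f_i(x)\|^2+C_i.$$ Let $\mathcal{Q}_1,\dots,\mathcal{Q}_n$ be mutually independent random operators, independent of $(g_1(x),\dots,g_n(x))$, with each $\mathcal{Q}_i$ an $\omega_i$-compression operator, and set $g(x)=\frac1n\sum_{i=1}^n\mathcal{Q}_i(g_i(x))$. Then there exist constants $A,B,C\ge 0$ such that for all $x$, $$\mathbb{E}\|g(x)\|^2\le 2A(f(x)-f^{\mathrm{inf}})+B\|\nabla f(x)\|^2+C.$$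
   Context: A random operator $\mathcal{Q}:\mathbb{R}^d\to\mathbb{R}^d$ is an $\omega$-compression operator ($\omega\ge0$) if for every $x\in\mathbb{R}^d$, $\mathbb{E}[\mathcal{Q}(x)]=x$ and $\mathbb{E}\|\mathcal{Q}(x)-x\|^2\le\omega\|x\|^2$. *)

From HB Require Import structures.
From mathcomp Require Import all_boot all_order all_algebra.
From mathcomp Require Import all_classical all_reals all_analysis.
Set Implicit Arguments. Unset Strict Implicit. Unset Printing Implicit Defensive.
Import Order.TTheory GRing.Theory Num.Theory.
Import numFieldNormedType.Exports.
Local Open Scope classical_set_scope.
Local Open Scope ring_scope.

Definition dotv {R : realType} {d : nat} (u v : 'rV[R]_d) : R :=
  \sum_(k < d) u 0 k * v 0 k.
Definition sqnorm {R : realType} {d : nat} (v : 'rV[R]_d) : R := dotv v v.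

(* gradient of f : R^d -> R at x (the vector representing the Frechet
   derivative 'd f x w.r.t. the standard inner product) *)
Definition grad {R : realType} {d : nat} (f : 'rV[R]_d -> R) (x : 'rV[R]_d)
  : 'rV[R]_d := \row_(k < d) ('d f x) (delta_mx 0 k : 'rV[R]_d).

(* coordinates as a d-tuple (used to put the Borel structure on R^d:
   n.-tuple R carries the product (coordinate) sigma-algebra) *)
Definition rv_of_tuple {R : realType} {d : nat} (t : d.-tuple R) : 'rV[R]_d :=
  \row_(k < d) tnth t k.

Definition sigma_of {dT} {T : measurableType dT} {R : realType} {I : Type}
  (X : I -> T -> R) : set (set T) :=
  <<s [set A | exists i (B : set R), measurable B /\ A = X i @^-1` B] >>.

Definition mutually_independent {dT} {T : measurableType dT} {R : realType}
  (P : probability T R) {I : finType} (F : I -> set (set T)) : Prop :=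
  forall (J : {set I}) (A : I -> set T),
    (forall j, j \in J -> F j (A j)) ->
    P (\bigcap_(j in [set j | j \in J]) A j) = (\prod_(j in J) P (A j))%E.

Definition finf {R : realType} {d : nat} (f : 'rV[R]_d -> R) : R := inf (range f).

From HB Require Import structures.
From mathcomp Require Import all_boot all_order all_algebra.
From mathcomp Require Import all_classical all_reals all_analysis.
From mathcomp Require Import measurable_realfun.
From mathcomp Require Import ring lra.
Import Order.TTheory GRing.Theory Num.Theory.
Import numFieldNormedType.Exports.
Local Open Scope classical_set_scope.
Local Open Scope ring_scope.

(* Independence lets one integrate out the compression first, and the crude
   bound |Q y|^2 <= 2 |Q y - y|^2 + 2 |y|^2 gives
   E |Q_i(g_i(x))|^2 <= 2 (1 + om_i) E |g_i(x)|^2.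
   Testing the smoothness inequality at y = x - grad f_i(x) / L_i gives
   |grad f_i(x)|^2 <= 2 L_i (f_i(x) - f_i^inf), which absorbs the B_i-term into
   the A_i-term.  Finally |(1/n) sum v_i|^2 <= (1/n) sum |v_i|^2 and
   f_i(x) - f_i^inf <= sum_j (f_j(x) - f_j^inf)
                     = n (f(x) - f^inf) + (n f^inf - sum_j f_j^inf),
   so the conclusion holds with B = 0. *)

Lemma sqr_sum_le (R : realFieldType) n (a : 'I_n -> R) :
  (\sum_(i < n) a i) ^+ 2 <= n%:R * \sum_(i < n) a i ^+ 2.
Proof.
have am_gm i j : a i * a j <= (a i ^+ 2 + a j ^+ 2) / 2.
  by have := sqr_ge0 (a i - a j); nra.
rewrite expr2 mulr_suml.
under eq_bigr do rewrite mulr_sumr.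
apply: (le_trans (ler_sum _ (fun i _ => ler_sum _ (fun j _ => am_gm i j)))).
under eq_bigr do rewrite -mulr_suml big_split /=.
rewrite -mulr_suml big_split /= sumr_const -exchange_big /= sumr_const card_ord.
lra.
Qed.

Lemma mean_weighted_gap_le (R : realFieldType) n (K D u m : 'I_n -> R) (M : R) :
  (forall i, 0 <= K i) -> (forall i, m i <= u i) ->
  n%:R^-1 * \sum_(i < n) (K i * (u i - m i) + D i) <=
  (\sum_(i < n) K i) * (n%:R^-1 * \sum_(i < n) u i - M)
  + ((\sum_(i < n) K i) * Num.max 0 (M - n%:R^-1 * \sum_(i < n) m i)
     + n%:R^-1 * \sum_(i < n) D i).
Proof.
move=> K_ge0 m_le_u; set Ks := \sum_(i < n) K i.
have weights_le : \sum_(i < n) K i * (u i - m i)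
    <= Ks * (\sum_(i < n) u i - \sum_(i < n) m i).
  rewrite -sumrB mulr_sumr; apply: ler_sum => i _; rewrite ler_wpM2r ?subr_ge0 //.
  by rewrite /Ks (bigD1 i) //= lerDl sumr_ge0.
have max_ge : M - n%:R^-1 * \sum_(i < n) m i
    <= Num.max 0 (M - n%:R^-1 * \sum_(i < n) m i).
  by rewrite le_max lexx orbT.
have Ks_ge0 : 0 <= Ks by exact: sumr_ge0.
have n_ge0 : 0 <= n%:R^-1 :> R by rewrite invr_ge0 ler0n.
move: weights_le max_ge; rewrite big_split /=.
set SK := \sum_(i < n) _; set Su := \sum_(i < n) u i; set Sm := \sum_(i < n) m i.
nra.
Qed.

Section sqnorm.
Context {R : realType} {d : nat}.
Implicit Types (a : R) (u v : 'rV[R]_d).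

Lemma sqnorm_ge0 v : 0 <= sqnorm v.
Proof. by apply: sumr_ge0 => k _; exact: sqr_ge0. Qed.

Lemma dotvZr a u v : dotv u (a *: v) = a * dotv u v.
Proof. by rewrite /dotv mulr_sumr; apply: eq_bigr => k _; rewrite mxE mulrCA. Qed.

Lemma sqnormZ a v : sqnorm (a *: v) = a ^+ 2 * sqnorm v.
Proof.
by rewrite /sqnorm /dotv mulr_sumr; apply: eq_bigr => k _; rewrite !mxE; ring.
Qed.

Lemma sqnormD_le u v : sqnorm (u + v) <= 2 * sqnorm u + 2 * sqnorm v.
Proof.
rewrite /sqnorm /dotv !mulr_sumr -big_split /=; apply: ler_sum => k _.
by rewrite mxE; have := sqr_ge0 (u 0 k - v 0 k); nra.
Qed.

Lemma sqnorm_sum_le {n} (v : 'I_n -> 'rV[R]_d) :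
  sqnorm (\sum_(i < n) v i) <= n%:R * \sum_(i < n) sqnorm (v i).
Proof.
rewrite /sqnorm /dotv exchange_big mulr_sumr /=; apply: ler_sum => k _.
rewrite summxE -expr2.
under [X in _ <= _ * X]eq_bigr do rewrite -expr2.
exact: sqr_sum_le.
Qed.

Lemma sqnorm_avg_le {n} (v : 'I_n -> 'rV[R]_d) :
  sqnorm (n%:R^-1 *: \sum_(i < n) v i) <= n%:R^-1 * \sum_(i < n) sqnorm (v i).
Proof.
rewrite sqnormZ; have [->|n0] := eqVneq (n%:R : R) 0.
  by rewrite invr0 expr0n !mul0r.
apply: (le_trans (ler_wpM2l (sqr_ge0 _) (sqnorm_sum_le v))).
by rewrite expr2 -mulrA mulKf.
Qed.

Lemma smooth_sqnorm_le (f : 'rV[R]_d -> R) x v L m : 0 < L ->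
  (forall y, f y <= f x + dotv v (y - x) + L / 2 * sqnorm (y - x)) ->
  (forall y, m <= f y) ->
  sqnorm v <= 2 * L * (f x - m).
Proof.
move=> L0 smooth lb; set t := L^-1.
have tL : t * L = 1 by rewrite mulVf ?gt_eqF.
have := lb (x - t *: v); have := smooth (x - t *: v).
have -> : x - t *: v - x = (- t) *: v by rewrite addrAC subrr add0r scaleNr.
rewrite dotvZr sqnormZ sqrrN -/(sqnorm v).
have -> : L / 2 * (t ^+ 2 * sqnorm v) = t * sqnorm v / 2.
  by rewrite -[RHS]mul1r -tL; ring.
move=> descent lb_step.
have -> : sqnorm v = L * (t * sqnorm v) by rewrite mulrA [L * t]mulrC tL mul1r.
rewrite -mulrA [2 * _]mulrC -mulrA ler_pM2l //; lra.
Qed.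

End sqnorm.

Definition tuple_of_rV {R : realType} {d : nat} (v : 'rV[R]_d) : d.-tuple R :=
  [tuple v 0 k | k < d].

Lemma tuple_of_rVK {R : realType} {d : nat} : cancel (@tuple_of_rV R d) rv_of_tuple.
Proof. by move=> v; apply/rowP => k; rewrite mxE tnth_mktuple. Qed.

Lemma sigma_of_tuple_preimage {R : realType} {dT : measure_display}
    {T : measurableType dT} {I : Type} {d : nat}
    (X : I -> T -> R) (e : 'I_d -> I) {B : set (d.-tuple R)} :
  measurable B -> sigma_of X ((fun w => [tuple X (e k) w | k < d]) @^-1` B).
Proof.
pose G := [set A | exists i (C : set R), measurable C /\ A = X i @^-1` C].
have mX : measurable_fun (setT : set (g_sigma_algebraType G))
    (fun w => [tuple X (e k) w | k < d]).
  apply/measurable_fun_tnthP => k _ C mC; rewrite setTI; apply: sub_sigma_algebra.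
  by exists (e k), C; split => //; apply/funext => w /=; rewrite /preimage /= tnth_mktuple.
by move=> mB; have := mX measurableT B mB; rewrite setTI.
Qed.

Section random_vectors.
Context {R : realType} {dT : measure_display} {T : measurableType dT} {d : nat}.
Variable P : probability T R.

Lemma mutually_independent_pair {I : finType} {F : I -> set (set T)} {i j : I}
    {A B : set T} :
  mutually_independent P F -> i != j -> F i A -> F j B ->
  P (A `&` B) = (P A * P B)%E.
Proof.
move=> indF ij FiA FjB; have ji : (j == i) = false by rewrite eq_sym (negbTE ij).
have := indF [set i; j]%SET (fun k => if k == i then A else B).
have -> : \bigcap_(k in [set k | k \in [set i; j]%SET]) (if k == i then A else B)
    = A `&` B.
  apply/seteqP; split => [w AB | w [Aw Bw] k _]; last by case: ifP.
  split; [have := AB i | have := AB j]; rewrite /= !inE eqxx ?orbT ?ji;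
    exact.
rewrite big_setU1 ?inE //= big_set1 eqxx ji; apply.
by move=> k; rewrite !inE => /orP[] /eqP->; rewrite ?eqxx ?ji.
Qed.

Lemma mutually_independent_tuple {n} (X : 'I_n * 'I_d -> T -> R)
    (F : 'I_n -> set (set T)) (i : 'I_n) :
  mutually_independent P (fun j : option 'I_n =>
    if j is Some i then <<s F i >> else sigma_of X) ->
  let Y w := [tuple X (i, k) w | k < d] in
  forall A B, <<s F i >> A -> measurable B ->
  P (A `&` Y @^-1` B) = (P A * P (Y @^-1` B))%E.
Proof.
move=> indep Y A B FA mB.
exact: (mutually_independent_pair (i := Some i) (j := None) indep _ FA
  (sigma_of_tuple_preimage X (pair i) mB)).
Qed.

Lemma measurable_g_sigma_id {F : set (set T)} :
  (forall A, F A -> measurable A) ->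
  measurable_fun setT (fun w : T => w : g_sigma_algebraType F).
Proof.
move=> mF _ A FA; rewrite setTI.
by apply: smallest_sub A FA => //; exact: sigma_algebra_measurable.
Qed.

(* The joint law of [(w, Y w)] is the product of the marginals, so
   Fubini-Tonelli applies. *)
Lemma ge0_le_integral_independent {F : set (set T)}
    {dU : measure_display} {U : measurableType dU} {Y : T -> U}
    {h : g_sigma_algebraType F * U -> \bar R} {c : U -> \bar R} :
  (forall A, F A -> measurable A) -> measurable_fun setT Y ->
  (forall A B, <<s F >> A -> measurable B ->
     P (A `&` Y @^-1` B) = (P A * P (Y @^-1` B))%E) ->
  measurable_fun [set: (g_sigma_algebraType F * U)%type] h ->
  (forall z, 0 <= h z)%E ->
  measurable_fun setT c -> (forall u, 0 <= c u)%E ->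
  (forall u, \int[P]_v h (v, u) <= c u)%E ->
  (\int[P]_w h (w, Y w) <= \int[P]_w c (Y w))%E.
Proof.
move=> mF mY indep mh h0 mc c0 hc.
pose X : {mfun T >-> g_sigma_algebraType F} :=
  HB.pack (fun w : T => w : g_sigma_algebraType F)
    (isMeasurableFun.Build _ _ _ _ _ (measurable_g_sigma_id mF)).
pose Ym : {mfun T >-> U} := HB.pack Y (isMeasurableFun.Build _ _ _ _ _ mY).
have mXY : measurable_fun setT (fun w => (X w, Ym w)).
  exact: measurable_fun_pair.
have -> : (\int[P]_w h (w, Y w)
    = \int[pushforward P (fun w => (X w, Ym w))]_z h z)%E.
  by rewrite ge0_integral_pushforward.
have -> : (\int[pushforward P (fun w => (X w, Ym w))]_z h z
    = \int[distribution P X \x distribution P Ym]_z h z)%E.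
  apply: eq_measure_integral => // Z mZ _; apply/esym.
  apply: product_measure_unique => [A B mA mB|//].
  by rewrite /pushforward /distribution /pushforward /= -indep.
have -> : (\int[P]_w c (Y w) = \int[distribution P Ym]_u c u)%E.
  by rewrite ge0_integral_distribution.
rewrite fubini_tonelli2 //.
apply: ge0_le_integral => //.
- by move=> u _; apply: integral_ge0.
- exact: measurable_fun_fubini_tonelli_G.
move=> u _; rewrite /fubini_G ge0_integral_distribution //; last exact: measurable_fun_pair1.
exact: hc.
Qed.

Lemma measurable_sqnorm {dU : measure_display} {U : measurableType dU}
    {u : U -> 'rV[R]_d} :
  (forall k, measurable_fun setT (fun w => u w 0 k)) ->
  measurable_fun setT (fun w => sqnorm (u w)).
Proof. by move=> mu; apply: measurable_sum => k; exact: measurable_funM. Qed.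

Lemma measurable_sqnorm_rv_of_tuple :
  measurable_fun setT (fun t : d.-tuple R => sqnorm (rv_of_tuple t)).
Proof.
apply: measurable_sqnorm => k.
by under eq_fun do rewrite mxE; exact: measurable_tnth.
Qed.

Lemma measurable_tuple_of_rV {u : T -> 'rV[R]_d} :
  (forall k, measurable_fun setT (fun w => u w 0 k)) ->
  measurable_fun setT (fun w => tuple_of_rV (u w)).
Proof.
move=> mu; apply/measurable_fun_tnthP => k.
have -> : (tnth (T:=R))^~ k \o (fun w => tuple_of_rV (u w)) = fun w => u w 0 k.
  by apply/funext => w; rewrite /= tnth_mktuple.
exact: mu.
Qed.

Lemma measurable_compress {F : set (set T)} {Q : T -> 'rV[R]_d -> 'rV[R]_d}
    {Y : T -> 'rV[R]_d} :
  (forall A, F A -> measurable A) ->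
  (forall k, measurable_fun setT
     (fun p : g_sigma_algebraType F * d.-tuple R => Q p.1 (rv_of_tuple p.2) 0 k)) ->
  (forall k, measurable_fun setT (fun w => Y w 0 k)) ->
  forall k, measurable_fun setT (fun w => Q w (Y w) 0 k).
Proof.
move=> mF mQ mY k.
have -> : (fun w => Q w (Y w) 0 k) =
    (fun p : g_sigma_algebraType F * d.-tuple R => Q p.1 (rv_of_tuple p.2) 0 k)
    \o (fun w => (w : g_sigma_algebraType F, tuple_of_rV (Y w))).
  by apply/funext => w /=; rewrite tuple_of_rVK.
apply: measurableT_comp (mQ k) _.
exact: measurable_fun_pair (measurable_g_sigma_id mF) (measurable_tuple_of_rV mY).
Qed.

Lemma compress_sqnorm_le {Q : T -> 'rV[R]_d -> 'rV[R]_d} {om : R} {y} :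
  (forall k, measurable_fun setT (fun w => Q w y 0 k)) ->
  (\int[P]_w (sqnorm (Q w y - y))%:E <= (om * sqnorm y)%:E)%E ->
  (\int[P]_w (sqnorm (Q w y))%:E <= (2 * (1 + om) * sqnorm y)%:E)%E.
Proof.
move=> mQ Qy.
have mQy : measurable_fun setT (fun w => (sqnorm (Q w y - y))%:E).
  apply/measurable_EFinP/measurable_sqnorm => k.
  by under eq_fun do rewrite !mxE; exact: measurable_funB.
apply: (@le_trans _ _
  (\int[P]_w (2%:E * (sqnorm (Q w y - y))%:E + (2 * sqnorm y)%:E))%E).
  apply: ge0_le_integral => //.
  - by move=> w _; rewrite lee_fin sqnorm_ge0.
  - exact/measurable_EFinP/measurable_sqnorm.
  - exact/emeasurable_funD/measurable_cst/emeasurable_funM.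
  - by move=> w _; rewrite -EFinM -EFinD lee_fin -{1}(subrK y (Q w y)) sqnormD_le.
rewrite ge0_integralD //; last 3 first.
- by move=> w _; rewrite -EFinM lee_fin mulr_ge0 ?sqnorm_ge0.
- exact: emeasurable_funM.
- by move=> w _; rewrite lee_fin mulr_ge0 ?sqnorm_ge0.
rewrite ge0_integralZl //; last by move=> w _; rewrite lee_fin sqnorm_ge0.
rewrite integral_cst // [X in (_ + _ * X)%E](probability_setT P) mule1.
apply: le_trans (leeD2r _ (lee_wpmul2l _ Qy)) _ => //.
by rewrite -EFinM -EFinD lee_fin; lra.
Qed.

Lemma independent_compress_sqnorm_le {F : set (set T)}
    {Q : T -> 'rV[R]_d -> 'rV[R]_d} {om : R} {Y : T -> 'rV[R]_d} :
  0 <= om ->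
  (forall A, F A -> measurable A) ->
  (forall k, measurable_fun setT
     (fun p : g_sigma_algebraType F * d.-tuple R => Q p.1 (rv_of_tuple p.2) 0 k)) ->
  (forall y, (\int[P]_w (sqnorm (Q w y - y))%:E <= (om * sqnorm y)%:E)%E) ->
  (forall k, measurable_fun setT (fun w => Y w 0 k)) ->
  (forall A B, <<s F >> A -> measurable B ->
     P (A `&` (tuple_of_rV \o Y) @^-1` B) = (P A * P ((tuple_of_rV \o Y) @^-1` B))%E) ->
  (\int[P]_w (sqnorm (Q w (Y w)))%:E
     <= (2 * (1 + om))%:E * \int[P]_w (sqnorm (Y w))%:E)%E.
Proof.
move=> om0 mF mQ Qbound mY indep.
have mh : measurable_fun [set: (g_sigma_algebraType F * d.-tuple R)%type]
    (fun p => (sqnorm (Q p.1 (rv_of_tuple p.2)))%:E).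
  by apply/measurable_EFinP; apply: measurable_sqnorm => k; exact: mQ.
have mc : measurable_fun setT
    (fun t : d.-tuple R => (2 * (1 + om) * sqnorm (rv_of_tuple t))%:E).
  apply/measurable_EFinP/measurable_funM => //.
  exact: measurable_sqnorm_rv_of_tuple.
have h_ge0 p : (0 <= (sqnorm (Q p.1 (rv_of_tuple p.2)))%:E)%E.
  by rewrite lee_fin sqnorm_ge0.
have c_ge0 (t : d.-tuple R) : (0 <= (2 * (1 + om) * sqnorm (rv_of_tuple t))%:E)%E.
  by rewrite lee_fin !mulr_ge0 ?addr_ge0 ?sqnorm_ge0.
have hc (t : d.-tuple R) : (\int[P]_w (sqnorm (Q (w, t).1 (rv_of_tuple (w, t).2)))%:E
    <= (2 * (1 + om) * sqnorm (rv_of_tuple t))%:E)%E.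
  apply: compress_sqnorm_le (Qbound _) => k.
  exact: measurableT_comp (measurable_fun_pair1 _ (mQ k)) (measurable_g_sigma_id mF).
have mY2 : measurable_fun setT (fun w => (sqnorm (Y w))%:E).
  exact/measurable_EFinP/measurable_sqnorm.
rewrite -ge0_integralZl //; last 2 first.
- by move=> w _; rewrite lee_fin sqnorm_ge0.
- by rewrite lee_fin mulr_ge0 ?addr_ge0.
under [X in (X <= _)%E]eq_integral do rewrite -[Y _]tuple_of_rVK.
under [X in (_ <= X)%E]eq_integral do rewrite -EFinM -[Y _]tuple_of_rVK.
exact: (ge0_le_integral_independent mF (measurable_tuple_of_rV mY) indep mh h_ge0 mc c_ge0 hc).
Qed.

Lemma compressed_sqnorm_le (f : 'rV[R]_d -> R) (L a b c om : R) x
    {F : set (set T)} {Q : T -> 'rV[R]_d -> 'rV[R]_d} {Y : T -> 'rV[R]_d} :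
  has_lbound (range f) ->
  (forall y, f y <= f x + dotv (grad f x) (y - x) + L / 2 * sqnorm (y - x)) ->
  0 <= a -> 0 <= b -> 0 <= om ->
  (forall k, measurable_fun setT (fun w => Y w 0 k)) ->
  (\int[P]_w (sqnorm (Y w))%:E
     <= (2 * a * (f x - finf f) + b * sqnorm (grad f x) + c)%:E)%E ->
  (forall A, F A -> measurable A) ->
  (forall k, measurable_fun setT
     (fun p : g_sigma_algebraType F * d.-tuple R => Q p.1 (rv_of_tuple p.2) 0 k)) ->
  (forall y, (\int[P]_w (sqnorm (Q w y - y))%:E <= (om * sqnorm y)%:E)%E) ->
  (forall A B, <<s F >> A -> measurable B ->
     P (A `&` (tuple_of_rV \o Y) @^-1` B) = (P A * P ((tuple_of_rV \o Y) @^-1` B))%E) ->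
  (\int[P]_w (sqnorm (Q w (Y w)))%:E
     <= (2 * (1 + om) * (2 * a + 2 * b * Num.max L 1) * (f x - finf f)
         + 2 * (1 + om) * c)%:E)%E.
Proof.
move=> flb smooth a0 b0 om0 mY Ybound mF mQ Qbound indep.
(* [L] may be nonpositive; the upper bound persists for the larger [max L 1]. *)
have grad_le : sqnorm (grad f x) <= 2 * Num.max L 1 * (f x - finf f).
  have L1_gt0 : 0 < Num.max L 1 by rewrite lt_max ltr01 orbT.
  apply: smooth_sqnorm_le L1_gt0 _ _ => y; last by apply: (ge_inf flb); exists y.
  apply: le_trans (smooth y) _.
  by rewrite lerD2l ler_wpM2r ?sqnorm_ge0 // ler_pM2r // le_max lexx.
apply: le_trans (independent_compress_sqnorm_le om0 mF mQ Qbound mY indep) _.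
apply: le_trans (lee_wpmul2l _ Ybound) _; first by rewrite lee_fin mulr_ge0 ?addr_ge0.
rewrite -EFinM lee_fin -!mulrA -mulrDr ler_wpM2l ?mulr_ge0 ?addr_ge0 //.
by have := ler_wpM2l b0 grad_le; nra.
Qed.

Lemma integral_sqnorm_avg_le {n} {X : 'I_n -> T -> 'rV[R]_d} :
  (forall i k, measurable_fun setT (fun w => X i w 0 k)) ->
  (\int[P]_w (sqnorm (n%:R^-1 *: \sum_(i < n) X i w))%:E
     <= (n%:R^-1)%:E * \sum_(i < n) \int[P]_w (sqnorm (X i w))%:E)%E.
Proof.
move=> mX; have mS i : measurable_fun setT (fun w => (sqnorm (X i w))%:E).
  exact/measurable_EFinP/measurable_sqnorm.
have S_ge0 i w : (0 <= (sqnorm (X i w))%:E)%E by rewrite lee_fin sqnorm_ge0.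
rewrite -ge0_integral_sum // -ge0_integralZl //; last 2 first.
- exact: emeasurable_sum.
- by move=> w _; rewrite sume_ge0.
apply: ge0_le_integral => //.
- by move=> w _; rewrite lee_fin sqnorm_ge0.
- apply/measurable_EFinP/measurable_sqnorm => k.
  under eq_fun do rewrite mxE summxE.
  by apply: measurable_funM => //; exact: measurable_sum.
- by apply: emeasurable_funM => //; exact: emeasurable_sum.
- by move=> w _; rewrite sumEFin -EFinM lee_fin sqnorm_avg_le.
Qed.

End random_vectors.

Theorem proposition4
  (R : realType) (n d : nat)
  (dT : measure_display) (T : measurableType dT) (P : probability T R)
  (f : 'I_n -> 'rV[R]_d -> R) (L A B C om : 'I_n -> R)
  (g : 'I_n -> 'rV[R]_d -> T -> 'rV[R]_d)
  (Q : 'I_n -> T -> 'rV[R]_d -> 'rV[R]_d)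
  (F : 'I_n -> set (set T)) :
  (* the f_i: differentiable, bounded below, L_i-smooth *)
  (forall i x, differentiable (f i) x) ->
  (forall i, has_lbound (range (f i))) ->
  (forall i x y, f i y <= f i x + dotv (grad (f i) x) (y - x)
                          + L i / 2 * sqnorm (y - x)) ->
  (* the stochastic gradients g_i(x): random vectors, unbiased,
     satisfying the ABC second-moment bound *)
  (forall i x k, measurable_fun setT (fun w => g i x w 0 k)) ->
  (forall i x k, P.-integrable setT (fun w => (g i x w 0 k)%:E) /\
     (\int[P]_w (g i x w 0 k)%:E = (grad (f i) x 0 k)%:E)%E) ->
  (forall i, 0 <= A i /\ 0 <= B i /\ 0 <= C i) ->
  (forall i x, (\int[P]_w (sqnorm (g i x w))%:E <=
     (2 * A i * (f i x - finf (f i)) + B i * sqnorm (grad (f i) x) + C i)%:E)%E) ->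
  (* the Q_i are random operators: Q_i is jointly measurable w.r.t. the
     sigma-algebra <<s F i >> (its own source of randomness, a sub-sigma-algebra
     of the ambient one) and the Borel sets of R^d *)
  (forall i A0, F i A0 -> measurable A0) ->
  (forall i k, measurable_fun setT
     (fun p : g_sigma_algebraType (F i) * (d.-tuple R) =>
        Q i p.1 (rv_of_tuple p.2) 0 k)) ->
  (* each Q_i is an om_i-compression operator *)
  (forall i, 0 <= om i) ->
  (forall i y k, P.-integrable setT (fun w => (Q i w y 0 k)%:E) /\
     (\int[P]_w (Q i w y 0 k)%:E = (y 0 k)%:E)%E) ->
  (forall i y, (\int[P]_w (sqnorm (Q i w y - y))%:E <= (om i * sqnorm y)%:E)%E) ->
  (* Q_1, ..., Q_n and (g_1(x), ..., g_n(x)) are mutually independent *)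
  (forall x, mutually_independent P
     (fun j : option 'I_n => match j with
        | None => sigma_of (fun ik : 'I_n * 'I_d => fun w => g ik.1 x w 0 ik.2)
        | Some i => <<s F i >>
        end)) ->
  let fbar := fun x => n%:R^-1 * \sum_(i < n) f i x in
  let gQ := fun x w => n%:R^-1 *: \sum_(i < n) Q i w (g i x w) in
  exists A0 B0 C0 : R, 0 <= A0 /\ 0 <= B0 /\ 0 <= C0 /\
    forall x, (\int[P]_w (sqnorm (gQ x w))%:E <=
      (2 * A0 * (fbar x - finf fbar) + B0 * sqnorm (grad fbar x) + C0)%:E)%E.
Proof.
move=> _ flb smooth gmeas _ ABC0 gbound Fmeas Qmeas om0 _ Qbound indep fbar gQ.
pose K i := 2 * (1 + om i) * (2 * A i + 2 * B i * Num.max (L i) 1).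
pose D i := 2 * (1 + om i) * C i.
have K_ge0 i : 0 <= K i.
  by have [? [? _]] := ABC0 i; rewrite !(mulr_ge0, addr_ge0) // le_max ler01 orbT.
have D_ge0 i : 0 <= D i by have [_ [_ ?]] := ABC0 i; rewrite !mulr_ge0 ?addr_ge0.
have agent_le i x : (\int[P]_w (sqnorm (Q i w (g i x w)))%:E
    <= (K i * (f i x - finf (f i)) + D i)%:E)%E.
  have [? [? _]] := ABC0 i.
  apply: compressed_sqnorm_le (gbound i x) (Fmeas i) (Qmeas i) (Qbound i) _ => //.
  exact (mutually_independent_tuple P (fun ik w => g ik.1 x w 0 ik.2) F i (indep x)).
exists ((\sum_(i < n) K i) / 2), 0,
  ((\sum_(i < n) K i) * Num.max 0 (finf fbar - n%:R^-1 * \sum_(i < n) finf (f i))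
   + n%:R^-1 * \sum_(i < n) D i).
have Ks_ge0 : 0 <= \sum_(i < n) K i by exact: sumr_ge0.
split; [exact: divr_ge0 | split; [done | split]].
  by rewrite addr_ge0 ?mulr_ge0 ?le_max ?lexx ?invr_ge0 // sumr_ge0.
move=> x; apply: le_trans (integral_sqnorm_avg_le P (X := fun i w => Q i w (g i x w))
  (fun i => measurable_compress (Fmeas i) (Qmeas i) (gmeas i x))) _.
apply: le_trans (lee_wpmul2l _ (lee_sum _ (fun i _ => agent_le i x))) _.
  by rewrite lee_fin invr_ge0.
rewrite sumEFin -EFinM lee_fin mul0r addr0 [2 * _]mulrC divfK ?pnatr_eq0 //.
by apply: mean_weighted_gap_le => // i; apply: (ge_inf (flb i)); exists x.
Qed.
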